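(* Assume $\mathcal{T}$ is a tree, and either (a) $\mu_{ij}=\mu_j$ for all $(i,j)\in\mathcal{E}$ and $\theta_i=0$ for all $i$, or (b) $\mu_{ij}=\mu_i$ for all $(i,j)\in\mathcal{E}$ and $\theta_i=0$ for all $i$. Then there is a constant $m_2$ such that for all measurable locally bounded functions $w_i,y_i$ ($i\in\mathcal{I}$), $z_j$ ($j\in\mathcal{J}$), $\psi_{ij}$ (with $\psi_{ij}=0$ for $i\not\sim j$) on $[0,\infty)$ satisfying $$\sum_{j\in\mathcal{J}}\mathfrak{T}_{\mu_{ij}}\psi_{ij}=w_i-\mathfrak{T}_{\theta_i}y_i\ (i\in\mathcal{I}),\quad \sum_{i\in\mathcal{I}}\psi_{ij}=-z_j\ (j\in\mathcal{J}),\quad y_i\ge0,\ z_j\ge0,\quad \min(e\cdot y(t),e\cdot z(t))=0,$$ we have $\|y(t)\|+\|z(t)\|\le m_2(1+t)^{m_2}\|w\|_t^*$ for all $t\ge0$.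
   Context: $\mathcal{I}=\{1,\dots,I\}$, $\mathcal{J}=\{I+1,\dots,I+J\}$, $\mathcal{E}\subset\mathcal{I}\times\mathcal{J}$, $i\sim j$ iff $(i,j)\in\mathcal{E}$; $\mathcal{T}$ is the bipartite graph with vertices $\mathcal{I}\cup\mathcal{J}$ and edges $\mathcal{E}$. Constants $\mu_{ij}>0$ for $(i,j)\in\mathcal{E}$, $\mu_{ij}=0$ otherwise, $\theta_i\ge0$. $\mathfrak{J}f(t)=\int_0^tf(s)ds$, $\mathfrak{T}_\alpha f=f+\alpha\mathfrak{J}f$. $\|a\|=\sum|a_k|$, $\|w\|_t^*=\sup_{0\le s\le t}\|w(s)\|$, $e=(1,\dots,1)'$. The constant $m_2$ does not depend on $t,w,y,z,\psi$. *)

From HB Require Import structures.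
From mathcomp Require Import all_boot all_order all_algebra.
From mathcomp Require Import all_classical all_reals all_analysis.
Set Implicit Arguments. Unset Strict Implicit. Unset Printing Implicit Defensive.
Import Order.TTheory GRing.Theory Num.Theory.
Import numFieldNormedType.Exports.
Local Open Scope classical_set_scope.
Local Open Scope ring_scope.

(* Vertices of the bipartite graph T: I-side ('I_I) and J-side ('I_J). *)
Definition bip_adj (I J : nat) (E : 'I_I -> 'I_J -> bool) : rel ('I_I + 'I_J) :=
  fun u v => match u, v with
             | inl i, inr j => E i j
             | inr j, inl i => E i j
             | _, _ => false
             end.

Definition is_tree (I J : nat) (E : 'I_I -> 'I_J -> bool) : Prop :=
  (forall u v : 'I_I + 'I_J, connect (bip_adj E) u v) /\
  (forall s : seq ('I_I + 'I_J), uniq s -> (3 <= size s)%N -> ~~ cycle (bip_adj E) s).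

Definition Jint (R : realType) (f : R -> R) (t : R) : R :=
  Rintegral lebesgue_measure `[0, t] f.

Definition Top (R : realType) (a : R) (f : R -> R) (t : R) : R :=
  f t + a * Jint f t.

Definition meas_locbdd (R : realType) (f : R -> R) : Prop :=
  measurable_fun (`[0, +oo[ : set R) f /\
  (forall t : R, 0 <= t -> exists M : R, forall s : R, 0 <= s <= t -> `|f s| <= M).

Definition supnorm (R : realType) (n : nat) (w : 'I_n -> R -> R) (t : R) : R :=
  sup [set (\sum_(k < n) `|w k s|) | s in `[0, t]].

(* Summing the flow equations over all vertices, rates of the form (a) or (b)
   turn them into a balance law  e.y - e.z = e.w + drift,  with drift
   sum_j mu_j J z_j  in case (a) and  - sum_i mu_i J Psi_i,  Psi_i = sum_j psi_ij,
   in case (b).  Complementarity gives  ||y|| + ||z|| = |e.w + drift|,  so it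
   suffices to bound the drift linearly in t.  In case (a) the drift is
   nonnegative, so e.z <= ||w||_t^* and J z_j(t) <= t ||w||_t^*.  In case (b),
   Psi_i + mu_i J Psi_i = w_i - y_i <= w_i, so Psi_i <= ||w||_t^* whenever
   J Psi_i >= 0, and a comparison argument gives J Psi_i(t) <= t ||w||_t^*; this
   bounds e.z, hence J(sum_i Psi_i) = - J(e.z) from below, and with it each
   J Psi_i(t). *)

From HB Require Import structures.
From mathcomp Require Import all_boot all_order all_algebra.
From mathcomp Require Import all_classical all_reals all_analysis.
From mathcomp Require Import ring lra.
Import Order.TTheory GRing.Theory Num.Theory.
Import numFieldNormedType.Exports.
Local Open Scope classical_set_scope.
Local Open Scope ring_scope.

Section LocallyBoundedIntegrals.
Local Set Implicit Arguments. Local Unset Strict Implicit.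
Context {R : realType}.
Implicit Types (f g : R -> R) (a b c s t : R).

Lemma lebesgue_measure_itv_fin (b0 b1 : bool) (a b : R) :
  (lebesgue_measure [set` Interval (BSide b0 a) (BSide b1 b)] < +oo)%E.
Proof. by rewrite lebesgue_measure_itv; case: ifP => _; rewrite ?ltry. Qed.

Lemma meas_locbdd_integrable f t : meas_locbdd f -> 0 <= t ->
  lebesgue_measure.-integrable `[0, t] (EFin \o f).
Proof.
move=> [mf bf] t0; have [M hM] := bf t t0.
apply: measurable_bounded_integrable => //.
- exact: lebesgue_measure_itv_fin.
- by apply: measurable_funS mf => // x; rewrite /= !in_itv /= => /andP[-> _].
- exists M; split; first exact: num_real.
  move=> x Mx s; rewrite /= in_itv /= => s0t.
  exact: le_trans (hM s s0t) (ltW Mx).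
Qed.

Lemma eq_meas_locbdd f g : meas_locbdd f -> (forall s, 0 <= s -> f s = g s) ->
  meas_locbdd g.
Proof.
move=> [mf bf] fg; split.
  by apply: eq_measurable_fun mf => x; rewrite inE /= in_itv /= andbT; exact: fg.
move=> t t0; have [M hM] := bf t t0; exists M => s /andP[s0 st].
by rewrite -fg // hM // s0 st.
Qed.

Lemma meas_locbdd_cst c : meas_locbdd (fun=> c).
Proof. by split; [exact: measurable_cst | move=> t _; exists `|c|]. Qed.

Lemma meas_locbddD f g : meas_locbdd f -> meas_locbdd g ->
  meas_locbdd (fun s => f s + g s).
Proof.
move=> [mf bf] [mg bg]; split; first exact: measurable_realfun.measurable_funD.
move=> t t0; have [M hM] := bf t t0; have [N hN] := bg t t0.
exists (M + N) => s hs; apply: le_trans (ler_normD _ _) _.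
by apply: lerD; [exact: hM | exact: hN].
Qed.

Lemma meas_locbdd_sum (n : nat) (F : 'I_n -> R -> R) :
  (forall k, meas_locbdd (F k)) -> meas_locbdd (fun s => \sum_(k < n) F k s).
Proof.
elim: n F => [|n IH] F hF.
  by apply: (eq_meas_locbdd (meas_locbdd_cst 0)) => s _; rewrite big_ord0.
apply: (eq_meas_locbdd (meas_locbddD (hF ord0) (IH _ (fun k => hF (lift ord0 k))))).
by move=> s _; rewrite big_ord_recl.
Qed.

Lemma eq_Jint f g t : (forall s, 0 <= s <= t -> f s = g s) -> Jint f t = Jint g t.
Proof.
by move=> fg; apply: eq_Rintegral => s; rewrite inE /= in_itv /=; exact: fg.
Qed.

Lemma Jint_cst c t : 0 <= t -> Jint (fun=> c) t = c * t.
Proof.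
rewrite le_eqVlt => /predU1P[<-|t_gt0].
  by rewrite /Jint set_itv1 Rintegral_set1 mulr0.
rewrite /Jint Rintegral_cst //.
by have /= -> := lebesgue_measure_itv `[0, t]; rewrite lte_fin t_gt0 /= subr0.
Qed.

Lemma Jint_at0 f : Jint f 0 = 0.
Proof. by rewrite /Jint set_itv1 Rintegral_set1. Qed.

Lemma Jint_eq0 f t : 0 <= t -> (forall s, 0 <= s <= t -> f s = 0) -> Jint f t = 0.
Proof. by move=> t0 f0; rewrite (eq_Jint f0) Jint_cst // mul0r. Qed.

Lemma JintD f g t : meas_locbdd f -> meas_locbdd g -> 0 <= t ->
  Jint (fun s => f s + g s) t = Jint f t + Jint g t.
Proof. by move=> hf hg t0; rewrite /Jint RintegralD //; exact: meas_locbdd_integrable. Qed.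

Lemma JintZ c f t : meas_locbdd f -> 0 <= t ->
  Jint (fun s => c * f s) t = c * Jint f t.
Proof. by move=> hf t0; rewrite /Jint RintegralZl //; exact: meas_locbdd_integrable. Qed.

Lemma JintN f t : meas_locbdd f -> 0 <= t -> Jint (fun s => - f s) t = - Jint f t.
Proof.
by move=> hf t0; rewrite -mulN1r -JintZ //; apply: eq_Jint => s _; rewrite mulN1r.
Qed.

Lemma Jint_sum (n : nat) (F : 'I_n -> R -> R) t : (forall k, meas_locbdd (F k)) ->
  0 <= t -> Jint (fun s => \sum_(k < n) F k s) t = \sum_(k < n) Jint (F k) t.
Proof.
move=> + t0; elim: n F => [|n IH] F hF.
  by rewrite big_ord0; apply: Jint_eq0 => // s _; rewrite big_ord0.
rewrite big_ord_recl -IH; last by move=> k; exact: hF.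
rewrite -JintD //; last exact: meas_locbdd_sum.
by apply: eq_Jint => s _; rewrite big_ord_recl.
Qed.

Lemma ler_Jint f g t : meas_locbdd f -> meas_locbdd g -> 0 <= t ->
  (forall s, 0 <= s <= t -> f s <= g s) -> Jint f t <= Jint g t.
Proof. by move=> hf hg t0 fg; apply: le_Rintegral => //; exact: meas_locbdd_integrable. Qed.

Lemma Jint_ge0 f t : (forall s, 0 <= s <= t -> 0 <= f s) -> 0 <= Jint f t.
Proof. by move=> f0; apply: Rintegral_ge0 => s; rewrite /= in_itv /=; exact: f0. Qed.

Lemma JintB_le f M s t : meas_locbdd f -> 0 <= s -> s <= t ->
  (forall x, s < x <= t -> f x <= M) -> Jint f t - Jint f s <= M * (t - s).
Proof.
move=> hf s0 st fM; have t0 := le_trans s0 st.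
rewrite /Jint Rintegral_itvB //; last exact: meas_locbdd_integrable.
have Mint : lebesgue_measure.-integrable `]s, t] (EFin \o fun=> M).
  apply: measurable_bounded_integrable => //; first exact: lebesgue_measure_itv_fin.
  exists `|M|; split=> [|x Mx y _]; first exact: num_real.
  by apply: ltW; apply: le_lt_trans Mx.
apply: (@le_trans _ _ (Rintegral lebesgue_measure `]s, t] (fun=> M))).
  apply: le_Rintegral => //.
  apply: integrableS (meas_locbdd_integrable hf t0) => //.
  by apply: subset_itvr; rewrite bnd_simp.
rewrite Rintegral_cst //; have /= -> := lebesgue_measure_itv `]s, t].
move: st; rewrite le_eqVlt => /predU1P[<-|st]; first by rewrite ltxx subrr mulr0.
by rewrite lte_fin st.
Qed.

Lemma Top0 f t : Top 0 f t = f t.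
Proof. by rewrite /Top mul0r addr0. Qed.

Lemma eq_Top a f g t : 0 <= t -> (forall s, 0 <= s <= t -> f s = g s) ->
  Top a f t = Top a g t.
Proof. by move=> t0 fg; rewrite /Top (eq_Jint fg) fg // t0 lexx. Qed.

Lemma Top_eq_rate (P : bool) a b f t : 0 <= t -> (P -> a = b) ->
  (~~ P -> forall s, 0 <= s -> f s = 0) -> Top a f t = Top b f t.
Proof.
move=> t0; case: P => [-> // | _ /(_ isT) f0].
by rewrite /Top Jint_eq0 ?mulr0 // => s /andP[s0 _]; exact: f0.
Qed.

Lemma Top_sum a (n : nat) (F : 'I_n -> R -> R) t : (forall k, meas_locbdd (F k)) ->
  0 <= t -> \sum_(k < n) Top a (F k) t = Top a (fun s => \sum_(k < n) F k s) t.
Proof. by move=> hF t0; rewrite /Top big_split /= -mulr_sumr Jint_sum. Qed.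

Lemma ler_supnorm (n : nat) (w : 'I_n -> R -> R) T s : (forall k, meas_locbdd (w k)) ->
  0 <= s <= T -> \sum_(k < n) `|w k s| <= supnorm w T.
Proof.
move=> hw sT; have T0 : 0 <= T by case/andP: sT => s0; exact: le_trans.
apply: sup_upper_bound; last by exists s; rewrite //= in_itv.
split; first by exists (\sum_(k < n) `|w k T|), T; rewrite //= in_itv /= T0 lexx.
exists (\sum_(k < n) projT1 (cid (proj2 (hw k) T T0))).
move=> r [x]; rewrite /= in_itv /= => xT <-.
by apply: ler_sum => k _; case: cid => M /= hM; exact: hM.
Qed.

Lemma supnorm_ge0 (n : nat) (w : 'I_n -> R -> R) T : (forall k, meas_locbdd (w k)) ->
  0 <= T -> 0 <= supnorm w T.
Proof.
move=> hw T0; apply: le_trans (ler_supnorm hw (s := 0) _); last by rewrite lexx.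
exact: sumr_ge0.
Qed.

Lemma ler_norm_supnorm (n : nat) (w : 'I_n -> R -> R) k T s :
  (forall k, meas_locbdd (w k)) -> 0 <= s <= T -> `|w k s| <= supnorm w T.
Proof.
move=> hw sT; apply: le_trans (ler_supnorm hw sT).
by rewrite (bigD1 k) //= lerDl sumr_ge0.
Qed.

Lemma ler_norm_sum_supnorm (n : nat) (w : 'I_n -> R -> R) T s :
  (forall k, meas_locbdd (w k)) -> 0 <= s <= T -> `|\sum_(k < n) w k s| <= supnorm w T.
Proof. by move=> hw sT; apply: le_trans (ler_norm_sum _ _ _) (ler_supnorm hw sT). Qed.

Lemma Jint_le_linear f W T : meas_locbdd f -> 0 <= W ->
  (forall s, 0 <= s <= T -> 0 <= Jint f s -> f s <= W) ->
  forall t, 0 <= t <= T -> Jint f t <= t * W.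
Proof.
move=> hf W0 fW t /andP[t0 tT].
have [L hL] := proj2 hf T (le_trans t0 tT).
have L0 : 0 <= L by apply: le_trans (hL 0 _); rewrite ?lexx ?(le_trans t0 tT).
pose S := [set s | 0 <= s <= t /\ Jint f s <= s * W].
have S0 : S 0 by split; rewrite ?lexx ?t0 // Jint_at0 mul0r.
have supS : has_sup S by split; [exists 0 | exists t => x [/andP[]]].
(* [u] is the last time up to [t] at which the bound holds; beyond it the
   integral is positive, so the hypothesis caps [f] by [W] on [u, t]. *)
set u := sup S.
have u0 : 0 <= u by apply: sup_upper_bound.
have ut : u <= t by apply: ge_sup; [exists 0 | move=> x [/andP[]]].
have f_le_W : forall x, u < x <= t -> f x <= W.
  move=> x /andP[ux xt]; have x0 := le_trans u0 (ltW ux).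
  apply: fW; first by rewrite x0 (le_trans xt tT).
  have notSx : ~ S x by move=> Sx; move: ux; rewrite ltNge sup_upper_bound.
  have /negP : ~ Jint f x <= x * W by move=> ?; apply: notSx; rewrite /S /= x0 xt.
  by rewrite -ltNge => /ltW; apply: le_trans; rewrite mulr_ge0.
apply/ler_addgt0Pr => e e0.
have eL : 0 < e / (L + 1) by rewrite divr_gt0 // ltr_wpDl.
have [s [/andP[s0 st] Ss] us] := sup_adherent eL supS.
have su : s <= u by apply: sup_upper_bound => //; split; rewrite ?s0.
have Jtu := JintB_le hf u0 ut f_le_W.
have Jus : Jint f u - Jint f s <= L * (u - s).
  apply: JintB_le => // x /andP[sx xu]; apply: le_trans (ler_norm _) (hL x _).
  by rewrite (le_trans s0 (ltW sx)) (le_trans xu (le_trans ut tT)).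
have Lus : L * (u - s) <= e.
  apply: le_trans (_ : L * (e / (L + 1)) <= e).
    by apply: ler_wpM2l => //; rewrite lerBlDr addrC -lerBlDr ltW.
  by rewrite mulrA ler_pdivrMr ?ltr_wpDl //; nra.
have := ler_wpM2r W0 su; lra.
Qed.

End LocallyBoundedIntegrals.

Section RealInequalities.
Context {R : realType}.
Implicit Types (a b c C M W X t : R).

Lemma min_eq0 a b : Num.min a b = 0 -> a = 0 \/ b = 0.
Proof. by rewrite minElt; case: ifP => _ ->; [left | right]. Qed.

Lemma min_eq0_add a b c : 0 <= a -> 0 <= b -> Num.min a b = 0 -> a - b = c ->
  a + b = `|c|.
Proof.
move=> a0 b0 /min_eq0[->|->] <-; first by rewrite add0r sub0r normrN ger0_norm.
by rewrite addr0 subr0 ger0_norm.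
Qed.

Lemma min_eq0_le a b c M : Num.min a b = 0 -> a - b = c -> 0 <= M -> - c <= M ->
  b <= M.
Proof. by move=> /min_eq0[->|->] <- //; rewrite sub0r opprK. Qed.

Lemma ler_powR_bound C t W X : 0 <= C -> 0 <= t -> 0 <= W ->
  X <= C * (1 + t) ^+ 2 * W -> X <= (C + 2) * (1 + t) `^ (C + 2) * W.
Proof.
move=> C0 t0 W0 /le_trans; apply.
have t1 : 1 <= 1 + t by rewrite lerDl.
have sq_le_pow : (1 + t) ^+ 2 <= (1 + t) `^ (C + 2).
  by rewrite -powR_mulrn ?(le_trans ler01 t1) // ler_powR // lerDr.
apply: ler_wpM2r => //; apply: ler_pM => //; first exact: exprn_ge0 (le_trans ler01 t1).
by rewrite lerDl.
Qed.

End RealInequalities.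

Section NetworkBounds.
Local Set Implicit Arguments. Local Unset Strict Implicit.
Context {R : realType} (I J : nat).
Variables (w y : 'I_I -> R -> R) (z : 'I_J -> R -> R) (psi : 'I_I -> 'I_J -> R -> R).
Hypothesis w_mlb : forall i, meas_locbdd (w i).
Hypothesis z_mlb : forall j, meas_locbdd (z j).
Hypothesis psi_mlb : forall i j, meas_locbdd (psi i j).
Hypothesis y_ge0 : forall i t, 0 <= t -> 0 <= y i t.
Hypothesis z_ge0 : forall j t, 0 <= t -> 0 <= z j t.
Hypothesis yz_compl : forall t, 0 <= t -> Num.min (\sum_i y i t) (\sum_j z j t) = 0.
Hypothesis psi_z : forall j t, 0 <= t -> \sum_i psi i j t = - z j t.

Lemma norm_yz_balance c t : 0 <= t -> \sum_i y i t - \sum_j z j t = c ->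
  \sum_i `|y i t| + \sum_j `|z j t| = `|c|.
Proof.
move=> t0 balance.
rewrite (eq_bigr (fun i => y i t)) => [|i _]; last by rewrite ger0_norm ?y_ge0.
rewrite [X in _ + X](eq_bigr (fun j => z j t)) => [|j _]; last by rewrite ger0_norm ?z_ge0.
by apply: min_eq0_add (yz_compl t0) balance; apply: sumr_ge0 => *; [exact: y_ge0 | exact: z_ge0].
Qed.

Lemma z_le_sum j t : 0 <= t -> z j t <= \sum_j z j t.
Proof. by move=> t0; rewrite (bigD1 j) //= lerDl sumr_ge0 // => k _; exact: z_ge0. Qed.

Section RatesOnJ.
Variable nu : 'I_J -> R.
Hypothesis nu_ge0 : forall j, 0 <= nu j.
Hypothesis psi_w : forall i t, 0 <= t -> \sum_j Top (nu j) (psi i j) t = w i t - y i t.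

Lemma balance_ratesJ t : 0 <= t ->
  \sum_i y i t - \sum_j z j t = \sum_i w i t + \sum_j nu j * Jint (z j) t.
Proof.
move=> t0; have : \sum_i (w i t - y i t) = \sum_j (- z j t - nu j * Jint (z j) t).
  rewrite -(eq_bigr _ (fun i _ => psi_w i t0)) exchange_big; apply: eq_bigr => j _ /=.
  rewrite Top_sum // (@eq_Top _ _ _ (fun s => - z j s)) // => [|s /andP[s0 _]].
    by rewrite /Top JintN // mulrN.
  exact: psi_z.
rewrite !sumrB sumrN; lra.
Qed.

Lemma z_le_supnorm j T s : 0 <= s <= T -> z j s <= supnorm w T.
Proof.
move=> /[dup] sT /andP[s0 sT']; apply: le_trans (z_le_sum j s0) _.
apply: min_eq0_le (yz_compl s0) (balance_ratesJ s0) _ _.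
  exact: supnorm_ge0 w_mlb (le_trans s0 sT').
have drift_ge0 : 0 <= \sum_j nu j * Jint (z j) s.
  apply: sumr_ge0 => k _; rewrite mulr_ge0 // Jint_ge0 // => x /andP[x0 _].
  exact: z_ge0.
have := ler_norm_sum_supnorm w_mlb sT; rewrite ler_norml; lra.
Qed.

Lemma Jint_z_le j T : 0 <= T -> 0 <= Jint (z j) T <= T * supnorm w T.
Proof.
move=> T0; rewrite Jint_ge0 => [|s /andP[s0 _]]; last exact: z_ge0.
rewrite mulrC -Jint_cst //; apply: ler_Jint => //; first exact: meas_locbdd_cst.
by move=> s sT; exact: z_le_supnorm.
Qed.

Lemma bound_ratesJ T : 0 <= T ->
  \sum_i `|y i T| + \sum_j `|z j T| <= (1 + \sum_j nu j) * (1 + T) ^+ 2 * supnorm w T.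
Proof.
move=> T0; rewrite (norm_yz_balance T0 (balance_ratesJ T0)).
have wT := ler_norm_sum_supnorm w_mlb (s := T) (T := T); rewrite T0 lexx in wT.
have drift_le : `|\sum_j nu j * Jint (z j) T| <= (\sum_j nu j) * (T * supnorm w T).
  rewrite mulr_suml; apply: le_trans (ler_norm_sum _ _ _) _; apply: ler_sum => j _.
  have /andP[Jz0 JzT] := Jint_z_le j T0.
  by rewrite normrM !ger0_norm // ler_wpM2l.
have N0 : 0 <= \sum_j nu j by exact: sumr_ge0.
move: (supnorm w T) (supnorm_ge0 w_mlb T0) (\sum_j nu j) N0 (wT isT) drift_le.
move=> W W0 N N0 {}wT drift_le.
apply: le_trans (ler_normD _ _) _; apply: le_trans (lerD wT drift_le) _.
have T2 : 1 + T <= (1 + T) ^+ 2 by rewrite expr2 ler_peMl ?lerDl // addr_ge0.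
apply: le_trans (_ : (1 + N) * (1 + T) * W <= _); last first.
  by rewrite ler_wpM2r // ler_wpM2l ?addr_ge0.
have -> : (1 + N) * (1 + T) * W = W + N * (T * W) + (T * W + N * W) by ring.
by rewrite lerDl addr_ge0 ?mulr_ge0.
Qed.

End RatesOnJ.

Section RatesOnI.
Variable nu : 'I_I -> R.
Hypothesis nu_ge0 : forall i, 0 <= nu i.
Hypothesis psi_w : forall i t, 0 <= t -> \sum_j Top (nu i) (psi i j) t = w i t - y i t.

Definition psi_row i s := \sum_j psi i j s.

Lemma psi_row_mlb i : meas_locbdd (psi_row i).
Proof. exact: meas_locbdd_sum. Qed.

Lemma Top_psi_row i t : 0 <= t -> Top (nu i) (psi_row i) t = w i t - y i t.
Proof. by move=> t0; rewrite -Top_sum ?psi_w. Qed.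

Lemma sum_psi_row t : 0 <= t -> \sum_i psi_row i t = - \sum_j z j t.
Proof.
by move=> t0; rewrite exchange_big -sumrN; apply: eq_bigr => j _; exact: psi_z.
Qed.

Lemma balance_ratesI t : 0 <= t ->
  \sum_i y i t - \sum_j z j t = \sum_i w i t - \sum_i nu i * Jint (psi_row i) t.
Proof.
move=> t0; have : \sum_i Top (nu i) (psi_row i) t = \sum_i (w i t - y i t).
  by apply: eq_bigr => i _; exact: Top_psi_row.
rewrite big_split /= sum_psi_row // sumrB; lra.
Qed.

Lemma Jint_psi_row_le i T t : 0 <= t <= T -> Jint (psi_row i) t <= t * supnorm w T.
Proof.
move=> tT; have T0 : 0 <= T by case/andP: tT; exact: le_trans.
apply: Jint_le_linear (psi_row_mlb i) (supnorm_ge0 w_mlb T0) _ t tT.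
move=> s sT J0; have s0 : 0 <= s by case/andP: sT.
have := Top_psi_row i s0; rewrite /Top.
have := ler_norm_supnorm i w_mlb sT; have := ler_norm (w i s).
have := y_ge0 i s0; have := mulr_ge0 (nu_ge0 i) J0; lra.
Qed.

Lemma sum_z_le_ratesI T s : 0 <= s <= T ->
  \sum_j z j s <= supnorm w T + (\sum_i nu i) * (T * supnorm w T).
Proof.
move=> /[dup] sT /andP[s0 sT']; have T0 := le_trans s0 sT'.
have W0 := supnorm_ge0 w_mlb T0.
apply: min_eq0_le (yz_compl s0) (balance_ratesI s0) _ _.
  by rewrite addr_ge0 // !mulr_ge0 // sumr_ge0.
have drift_le : \sum_i nu i * Jint (psi_row i) s <= (\sum_i nu i) * (T * supnorm w T).
  rewrite mulr_suml; apply: ler_sum => i _; rewrite ler_wpM2l //.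
  by apply: le_trans (Jint_psi_row_le i sT) _; rewrite ler_wpM2r.
have := ler_norm_sum_supnorm w_mlb sT; rewrite ler_norml; lra.
Qed.

Lemma Jint_psi_row_ge i T : 0 <= T ->
  - ((supnorm w T + (\sum_i nu i) * (T * supnorm w T)) * T + I%:R * (T * supnorm w T))
  <= Jint (psi_row i) T.
Proof.
move=> T0; have TT : 0 <= T <= T by rewrite T0 lexx.
have sum_Jint : \sum_k Jint (psi_row k) T = - Jint (fun s => \sum_j z j s) T.
  rewrite -Jint_sum //; last exact: psi_row_mlb.
  rewrite -JintN //; last exact: meas_locbdd_sum.
  by apply: eq_Jint => s /andP[s0 _]; exact: sum_psi_row.
have Jint_z_le : Jint (fun s => \sum_j z j s) T <=
    (supnorm w T + (\sum_i nu i) * (T * supnorm w T)) * T.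
  rewrite -Jint_cst //; apply: ler_Jint => //; [exact: meas_locbdd_sum | exact: meas_locbdd_cst |].
  by move=> s sT; exact: sum_z_le_ratesI.
have others : \sum_(k | k != i) Jint (psi_row k) T <= I%:R * (T * supnorm w T).
  apply: le_trans (_ : \sum_(k < I) T * supnorm w T <= _); last first.
    by rewrite sumr_const card_ord mulr_natl.
  have TW0 : 0 <= T * supnorm w T by rewrite mulr_ge0 // supnorm_ge0.
  rewrite [X in _ <= X](bigD1 i) //= -[X in X <= _]add0r lerD //.
  by apply: ler_sum => k _; exact: Jint_psi_row_le.
rewrite (bigD1 i) //= in sum_Jint; lra.
Qed.

Lemma bound_ratesI T : 0 <= T ->
  \sum_i `|y i T| + \sum_j `|z j T| <=
  (1 + (\sum_i nu i) * (1 + I%:R) + (\sum_i nu i) ^+ 2) * (1 + T) ^+ 2 * supnorm w T.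
Proof.
move=> T0; rewrite (norm_yz_balance T0 (balance_ratesI T0)).
have TT : 0 <= T <= T by rewrite T0 lexx.
have W0 := supnorm_ge0 w_mlb T0; have N0 : 0 <= \sum_i nu i by exact: sumr_ge0.
have Jint_norm i : `|Jint (psi_row i) T| <=
    (supnorm w T + (\sum_i nu i) * (T * supnorm w T)) * T + I%:R * (T * supnorm w T).
  rewrite ler_norml Jint_psi_row_ge //=; apply: le_trans (Jint_psi_row_le i TT) _.
  have := mulr_ge0 T0 W0; have := mulr_ge0 N0 (mulr_ge0 T0 W0).
  have := mulr_ge0 (ler0n R I) (mulr_ge0 T0 W0); nra.
have drift_le : `|\sum_i nu i * Jint (psi_row i) T| <= (\sum_i nu i) *
    ((supnorm w T + (\sum_i nu i) * (T * supnorm w T)) * T + I%:R * (T * supnorm w T)).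
  rewrite mulr_suml; apply: le_trans (ler_norm_sum _ _ _) _; apply: ler_sum => i _.
  by rewrite normrM ger0_norm // ler_wpM2l.
move: (ler_norm_sum_supnorm w_mlb TT) drift_le.
move: (supnorm w T) W0 (\sum_i nu i) N0 => W W0 N N0 wT drift_le.
apply: le_trans (ler_normB _ _) _; apply: le_trans (lerD wT drift_le) _.
have -> : (1 + N * (1 + I%:R) + N ^+ 2) * (1 + T) ^+ 2 * W =
    W + N * ((W + N * (T * W)) * T + I%:R * (T * W)) +
    (W * (2 * T + T ^+ 2) + (N + N * I%:R) * W * (1 + T + T ^+ 2) + N ^+ 2 * W * (1 + 2 * T)).
  by ring.
by rewrite lerDl !(addr_ge0, mulr_ge0, exprn_ge0).
Qed.

End RatesOnI.

End NetworkBounds.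

Theorem proposition2 (R : realType) (I J : nat) (E : 'I_I -> 'I_J -> bool)
    (mu : 'I_I -> 'I_J -> R) (theta : 'I_I -> R) :
  (forall i j, E i j -> 0 < mu i j) ->
  (forall i j, ~~ E i j -> mu i j = 0) ->
  (forall i, 0 <= theta i) ->
  is_tree E ->
  ((exists muJ : 'I_J -> R, (forall i j, E i j -> mu i j = muJ j) /\ (forall i, theta i = 0)) \/
   (exists muI : 'I_I -> R, (forall i j, E i j -> mu i j = muI i) /\ (forall i, theta i = 0))) ->
  exists m2 : R,
    forall (w y : 'I_I -> R -> R) (z : 'I_J -> R -> R) (psi : 'I_I -> 'I_J -> R -> R),
      (forall i, meas_locbdd (w i)) ->
      (forall i, meas_locbdd (y i)) ->
      (forall j, meas_locbdd (z j)) ->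
      (forall i j, meas_locbdd (psi i j)) ->
      (forall i j, ~~ E i j -> forall s, 0 <= s -> psi i j s = 0) ->
      (forall i t, 0 <= t ->
         \sum_(j < J) Top (mu i j) (psi i j) t = w i t - Top (theta i) (y i) t) ->
      (forall j t, 0 <= t -> \sum_(i < I) psi i j t = - z j t) ->
      (forall i t, 0 <= t -> 0 <= y i t) ->
      (forall j t, 0 <= t -> 0 <= z j t) ->
      (forall t, 0 <= t -> Num.min (\sum_(i < I) y i t) (\sum_(j < J) z j t) = 0) ->
      forall t, 0 <= t ->
        \sum_(i < I) `|y i t| + \sum_(j < J) `|z j t|
          <= m2 * (1 + t) `^ m2 * supnorm w t.
Proof.
move=> mu_gt0 _ _ _ [[muJ [mu_muJ theta0]] | [muI [mu_muI theta0]]].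
(* [`|muJ j|] is the rate on every edge at [j], and is nonnegative even when [j]
   is isolated. *)
- exists (1 + \sum_j `|muJ j| + 2).
  move=> w y z psi w_mlb _ z_mlb psi_mlb psi0 psi_w psi_z y_ge0 z_ge0 yz t t0.
  apply: ler_powR_bound => //; [by rewrite addr_ge0 ?sumr_ge0 | exact: supnorm_ge0 |].
  apply: bound_ratesJ => // i s s0.
  have := psi_w i s s0; rewrite theta0 Top0 => <-; apply: eq_bigr => j _.
  apply: (Top_eq_rate s0 _ (psi0 i j)) => Eij.
  by rewrite -(mu_muJ _ _ Eij) gtr0_norm ?mu_gt0.
- have N0 : 0 <= \sum_i `|muI i| by exact: sumr_ge0.
  exists (1 + (\sum_i `|muI i|) * (1 + I%:R) + (\sum_i `|muI i|) ^+ 2 + 2).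
  move=> w y z psi w_mlb _ z_mlb psi_mlb psi0 psi_w psi_z y_ge0 z_ge0 yz t t0.
  apply: ler_powR_bound => //; [by rewrite !addr_ge0 ?mulr_ge0 ?exprn_ge0 | exact: supnorm_ge0 |].
  apply: bound_ratesI => // i s s0.
  have := psi_w i s s0; rewrite theta0 Top0 => <-; apply: eq_bigr => j _.
  apply: (Top_eq_rate s0 _ (psi0 i j)) => Eij.
  by rewrite -(mu_muI _ _ Eij) gtr0_norm ?mu_gt0.
Qed.
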